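(* For every integer $n\ge1$, with the polynomial matrix $N(x)$ defined below, $\operatorname{Pf}N(x)=(-1)^{n+1}\operatorname{Pf}N(-2n-1-x)$ as polynomials in $x$.
   Context: For an indeterminate $y$ and integer $k\ge0$, $\binom yk=y(y-1)\cdots(y-k+1)/k!$. For integers $i,j\ge1$ define the polynomials $R_{i,j}(x)=\sum_{\ell=0}^{i-1}\frac{j-i}{i}\binom{j-1}{i-1-\ell}\binom{\ell+j}{\ell}\binom{2x+2n+2}{\ell+j+1}$ and $T_{i,j}(x)=\binom{2x+2n+1}{i}\big(\binom{x+n}{j}+\binom{x+n+1}{j}\big)$. $N(x)$ is the $(2n+2)\times(2n+2)$ skew-symmetric matrix with $N_{i,j}(x)=R_{i,j}(x)+T_{i,j}(x)-T_{j,i}(x)$ for $1\le i,j\le 2n$, $N_{i,2n+1}(x)=\binom{2n+2x+1}{i}-\binom{n+x}{i}-\binom{n+x+1}{i}$ and $N_{i,2n+2}(x)=\binom{x+n}{i-1}$ for $1\le i\le 2n$, and $N_{2n+1,2n+2}(x)=0$. *)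

From HB Require Import structures.
From Stdlib Require Import Lia.
From mathcomp Require Import all_boot all_order all_fingroup all_algebra.
Set Implicit Arguments. Unset Strict Implicit. Unset Printing Implicit Defensive.
Import Order.TTheory GRing.Theory Num.Theory.
Local Open Scope ring_scope.

Definition pbinom (y : {poly rat}) (k : nat) : {poly rat} :=
  ((k`!)%:R^-1 : rat) *: \prod_(l < k) (y - l%:R).

Lemma ord2_proof m (i : 'I_m) (b : bool) : (i.*2 + b < m.*2)%N.
Proof.
have /ssrnat.leP hi := ltn_ord i.
apply/ssrnat.leP; rewrite -!addnn; case: b => /=; rewrite -?plusE; lia.
Qed.
Definition ord2 m (i : 'I_m) (b : bool) : 'I_(m.*2) := Ordinal (ord2_proof i b).

Definition pfaffian m (A : 'M[{poly rat}]_(m.*2)) : {poly rat} :=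
  (((2 ^ m * m`!)%N)%:R^-1 : rat) *:
    \sum_(s : 'S_(m.*2)) (-1) ^+ (odd_perm s) *
       \prod_(i < m) A (s (ord2 i false)) (s (ord2 i true)).

(* The polynomials R_{i,j}(x) and T_{i,j}(x) (1-based indices i j >= 1). *)
Definition Rpol (n : nat) (x : {poly rat}) (i j : nat) : {poly rat} :=
  \sum_(l < i)
    (((j%:R - i%:R) / i%:R : rat) *: ('C(j.-1, (i.-1 - l)%N) * 'C((l + j)%N, l))%:R)
      * pbinom (2%:R * x + (2 * n + 2)%N%:R) (l + j).+1.

Definition Tpol (n : nat) (x : {poly rat}) (i j : nat) : {poly rat} :=
  pbinom (2%:R * x + (2 * n + 1)%N%:R) i *
   (pbinom (x + n%:R) j + pbinom (x + n.+1%:R) j).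

(* Upper-triangular description of N (1-based indices), i < j or i,j <= 2n. *)
Definition Nentry (n : nat) (x : {poly rat}) (i j : nat) : {poly rat} :=
  if (i <= 2 * n)%N then
    if (j <= 2 * n)%N then Rpol n x i j + Tpol n x i j - Tpol n x j i
    else if j == (2 * n + 1)%N then
      pbinom (2%:R * x + (2 * n + 1)%N%:R) i - pbinom (x + n%:R) i
        - pbinom (x + n.+1%:R) i
    else (* j = 2n+2 *) pbinom (x + n%:R) i.-1
  else 0. (* N_{2n+1,2n+2} = 0 *)

Definition Nfull (n : nat) (x : {poly rat}) (i j : nat) : {poly rat} :=
  if i == j then 0
  else if ((i <= 2 * n) && (j <= 2 * n))%N || (i < j)%N then Nentry n x i j
  else - Nentry n x j i.

Definition Nmat (n : nat) (x : {poly rat}) : 'M[{poly rat}]_((n.+1).*2) :=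
  \matrix_(i, j) Nfull n x i.+1 j.+1.

From HB Require Import structures.
From mathcomp Require Import all_boot all_order all_fingroup all_algebra.
From mathcomp Require Import ring zify.
Set Implicit Arguments. Unset Strict Implicit. Unset Printing Implicit Defensive.
Import Order.TTheory GRing.Theory Num.Theory.
Local Open Scope ring_scope.

(* Proof: we exhibit a matrix P with det P = (-1)^(n+1) and P N(x) P^T = N(x'),
   and conclude by Pf(P A P^T) = det P * Pf(A).  P is lower triangular: its
   first 2n x 2n block is the binomial inversion matrix ((-1)^i C(i,k)), and it
   ends with the diagonal entries -1, 1.  The development proceeds as follows.
   1. Binomial polynomials binom(y, k): substitution, values at naturals,
      Chu--Vandermonde, Pascal, absorption, reflection; identities are checked
      at the natural numbers and transported to any argument by substitution.
   2. Binomial inversion maps binom(z, a+1) and binom(z, a) to -binom(-z, i+1)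
      and binom(-z-1, i).
   3. The sums R_{i,j} as functions Rsum(y) of y = 2x+2n+2: their unit step is
      an explicit 2x2 "wedge" of binomials, whence, by a periodicity argument,
      binomial inversion on both indices turns Rsum(y) into Rsum(2-y).
   4. The congruence rule for Pfaffians, over any commutative ring.
   5. N(x) = R(x) + f(x)^g(x) + d(x)^e with explicit vectors f, g, d, e, and P
      maps each of these blocks to the corresponding block at x'. *)

Definition subst_stable (F : {poly rat} -> {poly rat}) : Prop :=
  forall y q, F y \Po q = F (y \Po q).

Lemma poly_eq_at_nat (p q : {poly rat}) :
  (forall m : nat, p.[m%:R] = q.[m%:R]) -> p = q.
Proof.
move=> pq; apply/eqP; rewrite -subr_eq0; apply/eqP.
apply: (@roots_geq_poly_eq0 _ _ [seq (m%:R : rat) | m <- iota 0 (size (p - q))]).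
- by apply/allP => x /mapP [m _ ->]; rewrite /root hornerD hornerN pq subrr.
- by rewrite map_inj_uniq ?iota_uniq // => a b /eqP; rewrite eqr_nat => /eqP.
- by rewrite size_map size_iota.
Qed.

Lemma subst_stable_eq (F G : {poly rat} -> {poly rat}) :
  subst_stable F -> subst_stable G -> (forall m : nat, F m%:R = G m%:R) ->
  forall y, F y = G y.
Proof.
move=> sF sG FG y.
have FGX : F 'X = G 'X.
  apply: poly_eq_at_nat => m; apply: polyC_inj.
  by rewrite -!comp_polyCr sF sG comp_polyX polyC_natr FG.
by rewrite -[y]comp_polyX -sF -sG FGX.
Qed.

Lemma subst_stable_periodic_eq0 (F : {poly rat} -> {poly rat}) :
  subst_stable F -> (forall y, F (y + 1) = F y) -> F 1 = 0 -> forall y, F y = 0.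
Proof.
move=> sF F1 F10.
have F00 : F 0 = 0 by have := F1 0; rewrite add0r F10.
apply: (subst_stable_eq (G := fun=> 0)) => // [y q|m] /=; first exact: comp_poly0.
by elim: m => [|m IH] //; rewrite -natr1 F1.
Qed.

Lemma pbinom0 (y : {poly rat}) : pbinom y 0 = 1.
Proof. by rewrite /pbinom big_ord0 fact0 invr1 scale1r. Qed.

Lemma pbinom_comp (y q : {poly rat}) k : pbinom y k \Po q = pbinom (y \Po q) k.
Proof.
rewrite /pbinom linearZ /= rmorph_prod; congr (_ *: _).
by apply: eq_bigr => i _; rewrite rmorphB /= rmorph_nat.
Qed.

Lemma pbinom_natr c k : pbinom c%:R k = ('C(c, k))%:R.
Proof.
have ffactE : \prod_(l < k) ((c%:R : {poly rat}) - l%:R) = (c ^_ k)%:R.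
  elim: k => [|k IH]; first by rewrite big_ord0 ffactn0.
  rewrite big_ord_recr /= IH ffactnSr natrM.
  have [lekc|ltck] := leqP k c; first by rewrite natrB.
  by rewrite ffact_small // !mul0r.
have fact_neq0 : (k`!%:R : rat) != 0 by rewrite pnatr_eq0 -lt0n fact_gt0.
by rewrite /pbinom ffactE -bin_ffact natrM mulr_natr -scaler_nat
  scalerA mulVf // scale1r.
Qed.

Lemma pbinom_natr_small c k : (c < k)%N -> pbinom c%:R k = 0.
Proof. by move=> ltck; rewrite pbinom_natr bin_small. Qed.

Lemma pbinom_shift (z : {poly rat}) c k :
  pbinom (z + c%:R) k = \sum_(l < k.+1) ('C(c, k - l))%:R * pbinom z l.
Proof.
move: z; apply: subst_stable_eq => [y q|y q|m].
- by rewrite pbinom_comp rmorphD /= rmorph_nat.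
- rewrite linear_sum; apply: eq_bigr => l _.
  by rewrite rmorphM /= rmorph_nat pbinom_comp.
- rewrite -natrD pbinom_natr.
  under eq_bigr do rewrite pbinom_natr -natrM mulnC.
  by rewrite -natr_sum -binomial.Vandermonde.
Qed.

Lemma pbinom_pascal (y : {poly rat}) k :
  pbinom (y + 1) k.+1 = pbinom y k.+1 + pbinom y k.
Proof.
move: y; apply: subst_stable_eq => [y q|y q|m].
- by rewrite pbinom_comp rmorphD /= rmorph1.
- by rewrite rmorphD /= !pbinom_comp.
- by rewrite natr1 !pbinom_natr binS natrD.
Qed.

Lemma pbinom_absorb (z : {poly rat}) k :
  pbinom z k.+1 *+ k.+1 = (z - k%:R) * pbinom z k.
Proof.
rewrite /pbinom big_ord_recr /= -scaler_nat scalerA factS natrM invfM.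
by rewrite mulrA mulfV ?pnatr_eq0 // mul1r mulrC scalerAr.
Qed.

Lemma pbinom_reflect (z : {poly rat}) c k :
  pbinom (- z - c%:R) k = (-1) ^+ k * pbinom (z + (c + k.-1)%:R) k.
Proof.
rewrite /pbinom -scalerAr; congr (_ *: _).
rewrite [in RHS](reindex_inj rev_ord_inj) /=.
transitivity (\prod_(i < k) ((-1) * (z + (c + i)%:R))).
  by apply: eq_bigr => i _; rewrite natrD; ring.
rewrite big_split /= prodr_const card_ord; congr (_ * _).
apply: eq_bigr => i _.
have -> : (c + k.-1 = (c + i) + (k - i.+1))%N by have := ltn_ord i; lia.
by rewrite !natrD; ring.
Qed.

Lemma pbinom_split (y : {poly rat}) a b :
  ('C(a + b, b))%:R * pbinom y (a + b) = pbinom y a * pbinom (y - a%:R) b.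
Proof.
have prod_split : \prod_(l < a + b) (y - l%:R) =
    \prod_(l < a) (y - l%:R) * \prod_(l < b) (y - a%:R - l%:R).
  rewrite big_split_ord /=; congr (_ * _); apply: eq_bigr => i _.
  by rewrite natrD opprD addrA.
rewrite /pbinom prod_split -polyC_natr mul_polyC scalerA -scalerAl -scalerAr.
rewrite scalerA; congr (_ *: _).
have fact_neq0 t : (t`!%:R : rat) != 0 by rewrite pnatr_eq0 -lt0n fact_gt0.
have bin_neq0 : ('C(a + b, b)%:R : rat) != 0 by rewrite pnatr_eq0 -lt0n bin_gt0 leq_addl.
have := bin_fact (leq_addl a b); rewrite addnK => <-.
by rewrite !natrM; field; rewrite !fact_neq0 bin_neq0.
Qed.

(* The entries (-1)^k C(k,a) of the lower triangular matrix that realises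
   the reflection x |-> -2n-1-x on the binomial bases. *)
Definition refl_coef (k a : nat) : {poly rat} := (-1) ^+ k * ('C(k, a))%:R.

(* Sums against refl_coef k stop at k, since C(k, a) = 0 for a > k. *)
Lemma refl_sum_trunc (F : nat -> {poly rat}) k K : (k < K)%N ->
  \sum_(a < K) refl_coef k a * F a = \sum_(a < k.+1) refl_coef k a * F a.
Proof.
move=> ltkK; rewrite (big_ord_widen _ (fun a => refl_coef k a * F a) ltkK).
rewrite [RHS]big_mkcond /=; apply: eq_bigr => a _; case: ltnP => // lt_k_a.
by rewrite /refl_coef bin_small // mulr0 mul0r.
Qed.

Lemma refl_sum_succ (z : {poly rat}) k K : (k < K)%N ->
  \sum_(a < K) refl_coef k a * pbinom z a.+1 = - pbinom (- z) k.+1.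
Proof.
move=> ltkK; rewrite (@refl_sum_trunc (fun a => pbinom z a.+1)) //.
have := pbinom_reflect z 0 k.+1; rewrite subr0 => ->.
rewrite add0n /= pbinom_shift [in RHS]big_ord_recl subn0 bin_small // mul0r add0r.
rewrite exprS mulN1r mulNr opprK mulr_sumr; apply: eq_bigr => a _.
by rewrite /= subSS bin_sub ?mulrA // -ltnS.
Qed.

Lemma refl_sum (z : {poly rat}) k K : (k < K)%N ->
  \sum_(a < K) refl_coef k a * pbinom z a = pbinom (- z - 1) k.
Proof.
move=> ltkK; rewrite (@refl_sum_trunc (pbinom z)) //.
have := pbinom_reflect z 1 k; rewrite mulr1n => ->.
have -> : pbinom (z + (1 + k.-1)%:R) k = pbinom (z + k%:R) k.
  by case: (k) => [|k']; rewrite ?pbinom0.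
rewrite pbinom_shift mulr_sumr; apply: eq_bigr => a _.
by rewrite bin_sub ?mulrA // -ltnS.
Qed.

(* The sum defining R_{i,j}, as a function of its argument y = 2x+2n+2. *)
Definition Rsum (y : {poly rat}) (i j : nat) : {poly rat} :=
  \sum_(l < i)
    (((j%:R - i%:R) / i%:R : rat) *: ('C(j.-1, (i.-1 - l)%N) * 'C((l + j)%N, l))%:R)
      * pbinom y (l + j).+1.

Lemma Rpol_Rsum n x i j : Rpol n x i j = Rsum (2%:R * x + (2 * n + 2)%N%:R) i j.
Proof. by []. Qed.

(* The antisymmetric combination measuring the unit step of Rsum. *)
Definition binom_wedge (z : {poly rat}) (i j : nat) : {poly rat} :=
  pbinom z i * pbinom z j.-1 - pbinom z j * pbinom z i.-1.

Lemma Rsum_comp (y q : {poly rat}) i j : Rsum y i j \Po q = Rsum (y \Po q) i j.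
Proof.
rewrite /Rsum linear_sum /=; apply: eq_bigr => l _.
by rewrite rmorphM /= linearZ /= rmorph_nat pbinom_comp.
Qed.

Lemma Rsum_at1 i j : (0 < j)%N -> Rsum 1 i j = 0.
Proof.
move=> j_gt0; rewrite /Rsum big1 // => l _.
by rewrite -[X in pbinom X]mulr1n pbinom_natr_small ?mulr0 // ltnS addn_gt0 j_gt0 orbT.
Qed.

Lemma Rsum_pascal (y : {poly rat}) i j :
  Rsum (y + 1) i j = Rsum y i j + ((j%:R - i%:R) / i%:R : rat) *:
    \sum_(l < i) ('C(j.-1, (i.-1 - l)%N) * 'C((l + j)%N, l))%:R * pbinom y (l + j).
Proof.
rewrite /Rsum scaler_sumr -big_split /=; apply: eq_bigr => l _.
by rewrite pbinom_pascal mulrDr !scalerAl.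
Qed.

(* The convolution left over by Rsum_pascal collapses by Chu--Vandermonde. *)
Lemma Rsum_convolution (y : {poly rat}) i j : (0 < j)%N ->
  \sum_(l < i.+1) ('C(j.-1, (i - l)%N) * 'C((l + j)%N, l))%:R * pbinom y (l + j) =
  pbinom y j * pbinom (y - 1) i.
Proof.
case: j => // j _.
have -> : y - 1 = (y - j.+1%:R) + j%:R by rewrite -natr1; ring.
rewrite pbinom_shift mulr_sumr; apply: eq_bigr => l _ /=.
by rewrite natrM -mulrA addnC pbinom_split mulrCA.
Qed.

(* After Rsum_convolution, the step term of Rsum_pascal is binom_wedge at
   z = y - 1: this is where the factor (j - i)/i is absorbed. *)
Lemma wedge_absorb (z : {poly rat}) i j :
  ((j.+1%:R - i.+1%:R) / i.+1%:R : rat) *: (pbinom (z + 1) j.+1 * pbinom z i) =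
  binom_wedge z i.+1 j.+1.
Proof.
have i_neq0 : (i.+1%:R : rat) != 0 by rewrite pnatr_eq0.
apply: (scalerI i_neq0); rewrite scalerA mulrCA mulfV // mulr1.
rewrite pbinom_pascal /binom_wedge /= scalerBl !scaler_nat.
apply/eqP; rewrite -subr_eq0; apply/eqP.
transitivity (pbinom z i * (pbinom z j.+1 *+ j.+1 - (z - j%:R) * pbinom z j)
   - pbinom z j * (pbinom z i.+1 *+ i.+1 - (z - i%:R) * pbinom z i)).
  move: (pbinom z j.+1) (pbinom z j) (pbinom z i.+1) (pbinom z i) => Bj1 Bj Bi1 Bi.
  ring.
by rewrite !pbinom_absorb !subrr !mulr0 subrr.
Qed.

Lemma Rsum_step (y : {poly rat}) i j : (0 < i)%N -> (0 < j)%N ->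
  Rsum (y + 1) i j = Rsum y i j + binom_wedge (y - 1) i j.
Proof.
case: i => // i _; case: j => // j j_gt0.
by rewrite Rsum_pascal Rsum_convolution // -wedge_absorb subrK.
Qed.

Lemma wedge_reflect (z : {poly rat}) i j K : (i < K)%N -> (j < K)%N ->
  \sum_(a < K) \sum_(b < K) (refl_coef i a * refl_coef j b) * binom_wedge z a.+1 b.+1
  = - binom_wedge (- z - 1) i.+1 j.+1.
Proof.
move=> ltiK ltjK.
transitivity (
    (\sum_(a < K) refl_coef i a * pbinom z a.+1) * (\sum_(b < K) refl_coef j b * pbinom z b)
  - (\sum_(a < K) refl_coef i a * pbinom z a) * (\sum_(b < K) refl_coef j b * pbinom z b.+1)).
  rewrite !mulr_suml -sumrB; apply: eq_bigr => a _.
  rewrite !mulr_sumr -sumrB; apply: eq_bigr => b _.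
  rewrite /binom_wedge !succnK.
  move: (refl_coef i a) (refl_coef j b) (pbinom z a.+1) (pbinom z b) (pbinom z b.+1)
    (pbinom z a) => ca cb Aa1 Bb Bb1 Aa; ring.
have pascal k : pbinom (- z) k.+1 = pbinom (- z - 1) k.+1 + pbinom (- z - 1) k.
  by rewrite -pbinom_pascal subrK.
rewrite !refl_sum_succ // !refl_sum // !pascal /binom_wedge !succnK.
move: (pbinom (- z - 1) i.+1) (pbinom (- z - 1) i) (pbinom (- z - 1) j.+1)
  (pbinom (- z - 1) j) => Ai1 Ai Bj1 Bj; ring.
Qed.

(* The R-block conjugated by the reflection matrix. *)
Definition Rsum_refl (y : {poly rat}) (i j K : nat) : {poly rat} :=
  \sum_(a < K) \sum_(b < K) (refl_coef i a * refl_coef j b) * Rsum y a.+1 b.+1.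

Lemma Rsum_refl_step (y : {poly rat}) i j K : (i < K)%N -> (j < K)%N ->
  Rsum_refl (y + 1) i j K = Rsum_refl y i j K - binom_wedge (- y) i.+1 j.+1.
Proof.
move=> ltiK ltjK; have := wedge_reflect (y - 1) ltiK ltjK.
rewrite (_ : - (y - 1) - 1 = - y); last by ring.
move <-; rewrite /Rsum_refl -big_split; apply: eq_bigr => a _.
by rewrite -big_split; apply: eq_bigr => b _; rewrite Rsum_step // mulrDr.
Qed.

Lemma Rsum_reflect (y : {poly rat}) i j K : (i < K)%N -> (j < K)%N ->
  Rsum_refl y i j K = Rsum (2 - y) i.+1 j.+1.
Proof.
move=> ltiK ltjK; apply/eqP; rewrite -subr_eq0; apply/eqP; move: y.
apply: subst_stable_periodic_eq0 => [y q|y|].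
- rewrite rmorphB /= Rsum_comp rmorphB /= rmorph_nat; congr (_ - _).
  rewrite /Rsum_refl linear_sum; apply: eq_bigr => a _.
  rewrite linear_sum; apply: eq_bigr => b _.
  by rewrite rmorphM /= Rsum_comp /refl_coef !rmorphM /= !rmorphXn /= !rmorphN1 !rmorph_nat.
- have -> : 2 - (y + 1) = 1 - y by ring.
  have -> : 2 - y = (1 - y) + 1 by ring.
  rewrite Rsum_refl_step // Rsum_step // (_ : 1 - y - 1 = - y); last by ring.
  ring.
- rewrite /Rsum_refl big1 => [|a _]; last by rewrite big1 // => b _; rewrite Rsum_at1 ?mulr0.
  have -> : (2 : {poly rat}) - 1 = 1 by ring.
  by rewrite Rsum_at1 ?subrr.
Qed.

Section PfaffianCongruence.
Variables (R : comPzRingType) (m : nat).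
Local Notation M := ('M[R]_(m.*2)).

(* Indices k < 2m are paired as k = 2i + b with i = k/2 and b = odd k. *)
Lemma half_ord_proof (k : 'I_(m.*2)) : (k./2 < m)%N.
Proof. by rewrite ltn_half_double. Qed.

Definition half_ord (k : 'I_(m.*2)) : 'I_m := Ordinal (half_ord_proof k).

Lemma half_ord2 (i : 'I_m) b : half_ord (ord2 i b) = i.
Proof. by apply: val_inj; rewrite /= addnC half_bit_double. Qed.

Lemma odd_ord2 (i : 'I_m) b : odd (ord2 i b) = b.
Proof. by rewrite /= oddD odd_double; case: b. Qed.

Lemma ord2_half (k : 'I_(m.*2)) : ord2 (half_ord k) (odd k) = k.
Proof. by apply: val_inj; rewrite /= addnC odd_double_half. Qed.

Lemma prod_pairs (G : 'I_(m.*2) -> R) :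
  \prod_(k < m.*2) G k = \prod_(i < m) (G (ord2 i false) * G (ord2 i true)).
Proof.
rewrite (reindex (fun p : 'I_m * bool => ord2 p.1 p.2)) /=; last first.
  exists (fun k => (half_ord k, odd k)) => [[i b] _ | k _] /=.
    by rewrite half_ord2 odd_ord2.
  by rewrite ord2_half.
rewrite -(pair_big xpredT xpredT (fun i b => G (ord2 i b))) /=.
by apply: eq_bigr => i _; rewrite big_bool mulrC.
Qed.

Definition pf_sum (A : M) : R :=
  \sum_(s : 'S_(m.*2)) (-1) ^+ (odd_perm s) *
       \prod_(i < m) A (s (ord2 i false)) (s (ord2 i true)).

(* A choice F of a pair of indices for each i < m, read as the sequence
   F(0).1, F(0).2, F(1).1, ... and as the matrix of this index map. *)
Definition pair_seq (F : {ffun 'I_m -> 'I_(m.*2) * 'I_(m.*2)}) (k : 'I_(m.*2)) :=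
  if odd k then (F (half_ord k)).2 else (F (half_ord k)).1.

Lemma pair_seq_ord2 F i b : pair_seq F (ord2 i b) = if b then (F i).2 else (F i).1.
Proof. by rewrite /pair_seq odd_ord2 half_ord2. Qed.

Definition pair_mx (F : {ffun 'I_m -> 'I_(m.*2) * 'I_(m.*2)}) : M :=
  \matrix_(r, k) ((pair_seq F k == r)%:R).

Lemma congruence_entry (P A : M) x y :
  (P *m A *m P^T) x y = \sum_(p : 'I_(m.*2) * 'I_(m.*2)) P x p.1 * A p.1 p.2 * P y p.2.
Proof.
rewrite mxE; under eq_bigr => k _ do rewrite !mxE mulr_suml.
by rewrite exchange_big /= pair_bigA /=; apply: eq_bigr => -[c d] _.
Qed.

(* Expanding the entries of P A P^T multilinearly expresses pf_sum of the
   congruent matrix through determinants of P times index-map matrices. *)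
Lemma pf_sum_congr_expand (P A : M) :
  pf_sum (P *m A *m P^T) = \sum_(F : {ffun 'I_m -> 'I_(m.*2) * 'I_(m.*2)})
     (\prod_(i < m) A (F i).1 (F i).2) * (\det P * \det (pair_mx F)).
Proof.
rewrite /pf_sum.
under eq_bigr => s _ do
  rewrite (eq_bigr _ (fun i _ => congruence_entry _ _ _ _)) bigA_distr_bigA mulr_sumr.
rewrite exchange_big /=; apply: eq_bigr => F _.
have mul_pair_mx : P *m pair_mx F = \matrix_(r, k) P r (pair_seq F k).
  apply/matrixP => r k; rewrite !mxE (bigD1 (pair_seq F k)) //= mxE eqxx mulr1.
  rewrite big1 ?addr0 // => c /negbTE hc.
  by rewrite mxE eq_sym hc mulr0.
rewrite -det_mulmx mul_pair_mx -det_tr /determinant mulr_sumr; apply: eq_bigr => s _.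
rewrite mulrCA; congr (_ * _).
rewrite (prod_pairs (fun k => _)) -big_split /=; apply: eq_bigr => i _.
by rewrite !mxE !pair_seq_ord2; ring.
Qed.

(* Taking P = 1 identifies the remaining sum with pf_sum A. *)
Lemma pf_sum_congr (P A : M) : pf_sum (P *m A *m P^T) = \det P * pf_sum A.
Proof.
have -> : pf_sum A = pf_sum (1%:M *m A *m (1%:M)^T) by rewrite mul1mx trmx1 mulmx1.
rewrite !pf_sum_congr_expand mulr_sumr; apply: eq_bigr => F _.
by rewrite det1 mul1r mulrCA.
Qed.

End PfaffianCongruence.

Lemma pfaffian_congr m (P A : 'M[{poly rat}]_(m.*2)) :
  pfaffian (P *m A *m P^T) = \det P * pfaffian A.
Proof. by rewrite /pfaffian -/(pf_sum _) -/(pf_sum A) pf_sum_congr scalerAr. Qed.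

Lemma prod_sign (R : pzRingType) k : \prod_(i < k.*2) ((-1) ^+ i : R) = (-1) ^+ k.
Proof.
elim: k => [|k IH]; first by rewrite big_ord0.
rewrite doubleS 2!big_ord_recr IH /= -!exprD -signr_odd [in RHS]oddS.
by rewrite -[LHS]signr_odd !oddD oddS odd_double; case: (odd k).
Qed.

Section ReflectionOfN.
Variable n : nat.

(* In 0-based indices k < 2n+2, N(x) = R(x) + f(x)^g(x) + d(x)^e, where
   u^v denotes the skew matrix u v^T - v u^T and the blocks are as follows. *)
Definition fvec (x : {poly rat}) (k : nat) : {poly rat} :=
  if (k < n.*2)%N then pbinom (2%:R * x + (2 * n + 1)%N%:R) k.+1
  else if k == n.*2 then 1 else 0.

Definition gvec (x : {poly rat}) (k : nat) : {poly rat} :=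
  if (k < n.*2)%N then pbinom (x + n%:R) k.+1 + pbinom (x + n.+1%:R) k.+1
  else if k == n.*2 then 1 else 0.

Definition dvec (x : {poly rat}) (k : nat) : {poly rat} :=
  if (k < n.*2)%N then pbinom (x + n%:R) k else 0.

Definition evec (k : nat) : {poly rat} := (k == n.*2.+1)%:R.

Definition Rblock (x : {poly rat}) (k l : nat) : {poly rat} :=
  if (k < n.*2)%N && (l < n.*2)%N then Rpol n x k.+1 l.+1 else 0.

Lemma Rpol_diag x i : Rpol n x i i = 0.
Proof. by rewrite /Rpol big1 // => l _; rewrite subrr mul0r scale0r mul0r. Qed.

Lemma Nfull_decomp x (i j : nat) : (i < n.*2.+2)%N -> (j < n.*2.+2)%N ->
  Nfull n x i.+1 j.+1 = Rblock x i j + fvec x i * gvec x j - gvec x i * fvec x j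
    + dvec x i * evec j - evec i * dvec x j.
Proof.
move=> hi hj; rewrite /Nfull /Nentry /Rblock /fvec /gvec /dvec /evec /Tpol !mul2n.
have ej : (j == n.*2.+1) = (n.*2 < j)%N by apply/eqP/idP; lia.
have ei : (i == n.*2.+1) = (n.*2 < i)%N by apply/eqP/idP; lia.
rewrite ei ej !eqSS !ltnS addn1.
case: (ltngtP i n.*2) => Hi; case: (ltngtP j n.*2) => Hj.
all: rewrite ?mulr0 ?mul0r ?mulr1 ?mul1r ?addr0 ?subr0 ?oppr0 /=.
- case: eqP => [->|_]; last by ring.
  by rewrite Rpol_diag; ring.
- rewrite (_ : (i == j) = false); last by apply/eqP; lia.
  rewrite (_ : (i < j)%N = true); last by lia.
  rewrite (_ : (j.+1 == n.*2.+1) = false); last by apply/eqP; lia.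
  by rewrite add0r.
- rewrite (_ : (i == j) = false); last by apply/eqP; lia.
  rewrite (_ : (i < j)%N = true); last by lia.
  rewrite Hj eqxx; ring.
- rewrite (_ : (i == j) = false); last by apply/eqP; lia.
  rewrite (_ : (i < j)%N = false); last by lia.
  rewrite (_ : (i.+1 == n.*2.+1) = false); last by apply/eqP; lia.
  by rewrite add0r.
- by case: ifP => //; case: ifP.
- by case: ifP => //; case: ifP.
- rewrite (_ : (i == j) = false); last by apply/eqP; lia.
  rewrite (_ : (i < j)%N = false); last by lia.
  rewrite Hi eqxx; ring.
- by case: ifP => //; case: ifP.
- by rewrite Hi Hj eqxx; ring.
Qed.

Definition wedge_mx (v w : nat -> {poly rat}) : 'M[{poly rat}]_((n.+1).*2) :=
  \matrix_(i, j) (v i * w j - w i * v j).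

Definition Rblock_mx (x : {poly rat}) : 'M[{poly rat}]_((n.+1).*2) :=
  \matrix_(i, j) Rblock x i j.

Lemma Nmat_decomp x :
  Nmat n x = Rblock_mx x + wedge_mx (fvec x) (gvec x) + wedge_mx (dvec x) evec.
Proof.
apply/matrixP => i j; rewrite !mxE Nfull_decomp ?ltn_ord //.
move: (Rblock x i j) (fvec x i) (gvec x j) (gvec x i) (fvec x j) (dvec x i) (evec j)
  (evec i) (dvec x j) => r fi gj gi fj di ej ei dj; ring.
Qed.

Definition refl_mx : 'M[{poly rat}]_((n.+1).*2) := \matrix_(i, k)
  (if (i < n.*2)%N && (k < n.*2)%N then refl_coef i k
   else if (i == k :> nat) then (if (i == n.*2 :> nat) then -1 else 1) else 0).

(* The image under refl_mx of the vector with entries v 0, v 1, ... *)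
Definition refl_vec (v : nat -> {poly rat}) (i : nat) : {poly rat} :=
  if (i < n.*2)%N then \sum_(k < n.*2) refl_coef i k * v k
  else if i == n.*2 then - v n.*2 else v n.*2.+1.

Lemma top_ltF : (n.*2.+1 < n.*2)%N = false.
Proof. by rewrite ltnNge leqnSn. Qed.

Lemma top_eqF : (n.*2.+1 == n.*2) = false.
Proof. by rewrite gtn_eqF. Qed.

Lemma sum_double_succ (G : nat -> {poly rat}) :
  \sum_(k < (n.+1).*2) G k = \sum_(k < n.*2) G k + G n.*2 + G n.*2.+1.
Proof. by rewrite doubleS 2!big_ord_recr. Qed.

Lemma refl_mx_mul (v : nat -> {poly rat}) (i : 'I_((n.+1).*2)) :
  \sum_k refl_mx i k * v k = refl_vec v i.
Proof.
pose G k := (if (i < n.*2)%N && (k < n.*2)%N then refl_coef i k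
   else if (i == k :> nat) then (if (i == n.*2 :> nat) then -1 else 1) else 0) * v k.
transitivity (\sum_(k < (n.+1).*2) G k); first by apply: eq_bigr => k _; rewrite mxE.
rewrite sum_double_succ /G /refl_vec ltnn top_ltF andbF.
have := ltn_ord i; case: (ltngtP i n.*2) => Hi hi.
- rewrite (_ : (i == n.*2.+1 :> nat) = false); last by apply/eqP; lia.
  by rewrite !mul0r !addr0; apply: eq_bigr => k _; rewrite (ltn_ord k).
- have -> : (i : nat) = n.*2.+1 by lia.
  rewrite eqxx big1 => [|k _]; first by rewrite mul1r mul0r !add0r.
  by rewrite (_ : (n.*2.+1 == k) = false) ?mul0r //; apply/eqP; have := ltn_ord k; lia.
- rewrite Hi big1 => [|k _]; last first.
    by rewrite (_ : (n.*2 == k) = false) ?mul0r //; apply/eqP; have := ltn_ord k; lia.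
  by rewrite eq_sym top_eqF mul0r addr0 add0r mulN1r.
Qed.

Lemma refl_vecE (v w : nat -> {poly rat}) :
  (forall i, (i < n.*2)%N -> \sum_(k < n.*2) refl_coef i k * v k = w i) ->
  - v n.*2 = w n.*2 -> v n.*2.+1 = w n.*2.+1 ->
  forall i, (i < n.*2.+2)%N -> refl_vec v i = w i.
Proof.
move=> low mid top i hi; rewrite /refl_vec.
case: (ltngtP i n.*2) => Hi; first exact: low.
- by have -> : i = n.*2.+1 by lia.
- by rewrite Hi.
Qed.

Lemma wedge_congr (v w : nat -> {poly rat}) :
  refl_mx *m wedge_mx v w *m refl_mx^T = wedge_mx (refl_vec v) (refl_vec w).
Proof.
apply/matrixP => i j; rewrite congruence_entry mxE -!refl_mx_mul.
rewrite !mulr_suml -sumrB.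
rewrite -(pair_bigA _ (fun a b => refl_mx i a * wedge_mx v w a b * refl_mx j b)) /=.
apply: eq_bigr => a _; rewrite !mulr_sumr -sumrB; apply: eq_bigr => b _.
rewrite [wedge_mx _ _ _ _]mxE.
by move: (refl_mx i a) (refl_mx j b) (v a) (v b) (w a) (w b) => p q va vb wa wb; ring.
Qed.

Lemma Rblock_hi (y : {poly rat}) (a b : nat) :
  (n.*2 <= a)%N || (n.*2 <= b)%N -> Rblock y a b = 0.
Proof. by rewrite /Rblock !ltnNge => /orP [->|->]; rewrite ?andbF. Qed.

Lemma refl_vec_zero (v : nat -> {poly rat}) i : (forall k, v k = 0) -> refl_vec v i = 0.
Proof.
move=> v0; rewrite /refl_vec !v0 oppr0 big1 ?if_same // => k _.
by rewrite v0 mulr0.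
Qed.

Lemma refl_vec_hi0 (v : nat -> {poly rat}) i :
  v n.*2 = 0 -> v n.*2.+1 = 0 -> (n.*2 <= i)%N -> refl_vec v i = 0.
Proof. by move=> v2n v2n1 le_2n_i; rewrite /refl_vec ltnNge le_2n_i v2n v2n1 oppr0 if_same. Qed.

(* Under x' = -2n-1-x, refl_mx maps f(x), g(x), d(x), e to -f(x'), -g(x'),
   d(x'), e: on the first 2n entries this is binomial inversion. *)
Section Reflection.
Variables x x' : {poly rat}.
Hypothesis reflect_x : x' = - ((2 * n + 1)%N%:R) - x.

Lemma refl_fvec i : (i < n.*2.+2)%N -> refl_vec (fvec x) i = - fvec x' i.
Proof.
move: i; apply: refl_vecE => [i lt_i_2n||]; rewrite /fvec ?ltnn ?eqxx //.
- under eq_bigr do rewrite (ltn_ord _).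
  rewrite lt_i_2n refl_sum_succ //; congr (- pbinom _ _).
  by rewrite reflect_x !natrD ?natrM; ring.
- by rewrite top_ltF top_eqF oppr0.
Qed.

Lemma refl_gvec i : (i < n.*2.+2)%N -> refl_vec (gvec x) i = - gvec x' i.
Proof.
move: i; apply: refl_vecE => [i lt_i_2n||]; rewrite /gvec ?ltnn ?eqxx //.
- under eq_bigr do rewrite (ltn_ord _) mulrDr.
  rewrite lt_i_2n big_split /= !refl_sum_succ //.
  have -> : - (x + n%:R) = x' + n.+1%:R by rewrite reflect_x -natr1 !natrD ?natrM; ring.
  have -> : - (x + n.+1%:R) = x' + n%:R by rewrite reflect_x -natr1 !natrD ?natrM; ring.
  by rewrite opprD addrC.
- by rewrite top_ltF top_eqF oppr0.
Qed.

Lemma refl_dvec i : (i < n.*2.+2)%N -> refl_vec (dvec x) i = dvec x' i.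
Proof.
move: i; apply: refl_vecE => [i lt_i_2n||]; rewrite /dvec ?ltnn ?oppr0 //.
- under eq_bigr do rewrite (ltn_ord _).
  rewrite lt_i_2n refl_sum //; congr (pbinom _ _).
  by rewrite reflect_x !natrD ?natrM; ring.
- by rewrite top_ltF.
Qed.

Lemma refl_evec i : (i < n.*2.+2)%N -> refl_vec evec i = evec i.
Proof.
move: i; apply: refl_vecE => [i lt_i_2n||]; rewrite /evec.
- rewrite (_ : (i == n.*2.+1) = false); last by apply/eqP; lia.
  rewrite big1 // => k _.
  by rewrite (_ : (k == n.*2.+1 :> nat) = false) ?mulr0 //; apply/eqP; have := ltn_ord k; lia.
- by rewrite eq_sym top_eqF oppr0.
- by [].
Qed.

Lemma Rblock_reflect i j : (i < n.*2)%N -> (j < n.*2)%N ->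
  \sum_(a < n.*2) refl_coef i a * \sum_(b < n.*2) refl_coef j b * Rblock x a b =
  Rblock x' i j.
Proof.
move=> lt_i_2n lt_j_2n; rewrite /Rblock lt_i_2n lt_j_2n /=.
transitivity (Rsum_refl (2%:R * x + (2 * n + 2)%N%:R) i j n.*2).
  rewrite /Rsum_refl; apply: eq_bigr => a _; rewrite mulr_sumr; apply: eq_bigr => b _.
  by rewrite !ltn_ord mulrA Rpol_Rsum.
rewrite Rsum_reflect // Rpol_Rsum; congr Rsum.
by rewrite reflect_x !natrD ?natrM; ring.
Qed.

Lemma Rblock_congr : refl_mx *m Rblock_mx x *m refl_mx^T = Rblock_mx x'.
Proof.
apply/matrixP => i j; rewrite congruence_entry [RHS]mxE.
transitivity (\sum_a refl_mx i a * \sum_b refl_mx j b * Rblock x a b).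
  rewrite -(pair_bigA _ (fun a b => refl_mx i a * Rblock_mx x a b * refl_mx j b)) /=.
  apply: eq_bigr => a _; rewrite mulr_sumr; apply: eq_bigr => b _.
  rewrite [Rblock_mx _ _ _]mxE.
  by move: (refl_mx i a) (refl_mx j b) (Rblock x a b) => p q r; ring.
under eq_bigr => a _ do rewrite (refl_mx_mul (fun b => Rblock x a b) j).
rewrite (refl_mx_mul (fun a => refl_vec (Rblock x a) j) i).
move: (nat_of_ord i) (nat_of_ord j) (ltn_ord i) (ltn_ord j) => {}i {}j lt_i lt_j.
have Rhi k : (n.*2 <= k)%N -> refl_vec (Rblock x k) j = 0.
  by move=> le_2n_k; apply: refl_vec_zero => b; rewrite Rblock_hi ?le_2n_k.
move: i lt_i; apply: refl_vecE => [i lt_i_2n||]; last 2 first.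
- by rewrite Rhi // oppr0 Rblock_hi ?leqnn.
- by rewrite Rhi ?leqnSn // Rblock_hi ?leqnSn.
case: (ltnP j n.*2) => [lt_j_2n|le_2n_j].
  by rewrite -Rblock_reflect //; apply: eq_bigr => a _; rewrite /refl_vec lt_j_2n.
rewrite [RHS]Rblock_hi ?le_2n_j ?orbT // big1 // => a _.
by rewrite refl_vec_hi0 ?mulr0 // Rblock_hi ?leqnn ?leqnSn ?orbT.
Qed.

Lemma Nmat_congr : refl_mx *m Nmat n x *m refl_mx^T = Nmat n x'.
Proof.
rewrite !Nmat_decomp !mulmxDr !mulmxDl Rblock_congr !wedge_congr.
congr (_ + _ + _); apply/matrixP => i j; rewrite !mxE;
  have lt_i : (i < n.*2.+2)%N := ltn_ord i; have lt_j : (j < n.*2.+2)%N := ltn_ord j.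
- by rewrite !refl_fvec // !refl_gvec // !mulrNN.
- by rewrite !refl_dvec // !refl_evec.
Qed.

End Reflection.

(* refl_mx is lower triangular with diagonal (-1)^i (i < 2n), -1, 1. *)
Lemma det_refl_mx : \det refl_mx = (-1) ^+ n.+1.
Proof.
rewrite det_trig; last first.
  apply/is_trig_mxP => i j lt_i_j; rewrite mxE.
  case: ifP => [_|_]; first by rewrite /refl_coef bin_small // mulr0.
  by rewrite (_ : (i == j :> nat) = false) //; apply/eqP; lia.
transitivity (\prod_(i < (n.+1).*2) (if (i < n.*2)%N then ((-1) ^+ i : {poly rat})
   else if (i == n.*2 :> nat) then -1 else 1)).
  apply: eq_bigr => i _; rewrite mxE eqxx andbb.
  by case: ifP => // _; rewrite /refl_coef binn mulr1.
rewrite doubleS 2!big_ord_recr /= ltnn eqxx top_ltF top_eqF mulr1 exprS mulrC.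
by congr (_ * _); rewrite -prod_sign; apply: eq_bigr => i _; rewrite (ltn_ord i).
Qed.

End ReflectionOfN.

(* Pf N(x) = (-1)^(n+1) Pf N(-2n-1-x): conjugate by refl_mx, whose
   determinant squares to 1. *)
Theorem mainTheorem11 (n : nat) (hn : (1 <= n)%N) :
  pfaffian (Nmat n 'X) =
  (-1) ^+ n.+1 * pfaffian (Nmat n (- ((2 * n + 1)%N%:R) - 'X)).
Proof.
rewrite -(@Nmat_congr n 'X (- ((2 * n + 1)%N%:R) - 'X)) // pfaffian_congr det_refl_mx.
by rewrite mulrA -exprD addnn -signr_odd odd_double expr0 mul1r.
Qed.
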